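(* Fix $L\ge1$. (a) $(2^\omega,(g^L_n|_{\mathbb{D}^L_n})_{n\in\omega})$ is a strongly complex situation. (b) If $s\in\omega^{<\omega}$ is strictly increasing with $2\le|s|\le L$, $\alpha\in\mathbb{D}^L_{s(|s|-1)}$, and $g_s(\alpha)$, $g_{s^-}(\alpha)$ are both defined, then $g_s(\alpha)\ne g_{s^-}(\alpha)$. (c) If $s\in\omega^{<\omega}$ is strictly increasing with $|s|=L+1$ and $g_s(\alpha)$, $g_{s^-}(\alpha)$ are both defined, then $g_s(\alpha)=g_{s^-}(\alpha)$.
   Context: Let $\psi:\omega\to2^{<\omega}$ enumerate finite binary sequences by length then lexicographically. Let $q_0=0$, $q_{n+1}=3\cdot2^{q_n}$, $t_n:=\psi(n)0^{2^{q_n}-|\psi(n)|}$, $S_n:=\{2^{q_n}j:j\ge1\}$, $N_t=\{\alpha\in 2^\omega:t\subseteq\alpha\}$. Define $\theta$ on $\{j\ge1\}$ depending on $L$: if $L=1$, $\theta(j)=2j+1$; if $L\ge2$, with $P_L:=\{2^p3^l:p\in\omega,l<L-2\}$ and $M_L:=\{2^{31}\cdot3\cdot k:k\ge1,k\notin P_L\}$, $\theta(j)=3j$ if $j\notin M_L\cup(M_L+1)$, $3j+3$ if $j\in M_L$, $3j-3$ if $j\in M_L+1$. Let $\theta_n(k)=k$ for $k\notin S_n$ and $\theta_n(2^{q_n}j)=2^{q_n}\theta(j)$. Define $g_n=g^L_n:N_{t_n0}\to N_{t_n1}$ by $g_n(\alpha)(k)=1$ if $k=2^{q_n}$, $g_n(\alpha)(k)=\alpha(\theta_n(k))$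 otherwise. Let $\mathbb{D}^1_n:=N_{t_n0}$ and for $L\ge2$, $\mathbb{D}^L_n:=\{\alpha\in N_{t_n0}:\forall m\le n\ \alpha(2^{q_n}3^m)\ne\alpha(2^{q_n}3^{m+1})\}$. For $s\in\omega^{<\omega}$ nonempty, $g_s:=g_{s(0)}\circ\dots\circ g_{s(|s|-1)}$ (partial composition) and $s^-:=(s(0),\dots,s(|s|-2))$. A strongly complex situation is $(X,(f_n))$ with $X$ a nonempty zero-dimensional perfect Polish space, each $f_n$ a partial continuous open map with clopen domain and range, $\Delta(X)\subseteq\overline{\bigcup_n\mathrm{Graph}(f_n)}\setminus\bigcup_n\mathrm{Graph}(f_n)$, and the restriction of any $f_n$ to any nonempty open subset of its domain not countable-to-one. *)

From mathcomp Require Import all_boot.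
From Stdlib Require Import ClassicalEpsilon.
Set Implicit Arguments. Unset Strict Implicit. Unset Printing Implicit Defensive.

Definition cantor := nat -> bool.

Definition agree (k : nat) (a b : cantor) : Prop := forall i, i < k -> a i = b i.

Definition is_open (U : cantor -> Prop) : Prop :=
  forall a, U a -> exists k, forall b, agree k a b -> U b.
Definition is_closed (U : cantor -> Prop) : Prop := is_open (fun a => ~ U a).
Definition clopen (U : cantor -> Prop) : Prop := is_open U /\ is_closed U.

Definition image (D : cantor -> Prop) (f : cantor -> cantor) : cantor -> Prop :=
  fun b => exists a, D a /\ f a = b.

Definition continuous_on (D : cantor -> Prop) (f : cantor -> cantor) : Prop :=
  forall a, D a -> forall k, exists m, forall b, D b -> agree m a b -> agree k (f a) (f b).

Definition open_map_on (D : cantor -> Prop) (f : cantor -> cantor) : Prop :=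
  forall U, is_open U -> (forall a, U a -> D a) -> is_open (image U f).

Definition countable_set (S : cantor -> Prop) : Prop :=
  exists h : cantor -> nat, forall a b, S a -> S b -> h a = h b -> a = b.

Definition countable_to_one_on (U : cantor -> Prop) (f : cantor -> cantor) : Prop :=
  forall y, countable_set (fun a => U a /\ f a = y).

(* (a,b) lies in the closure (in 2^omega x 2^omega) of the union of the
   graphs of the partial maps f n with domains D n *)
Definition in_closure_graphs (D : nat -> cantor -> Prop) (f : nat -> cantor -> cantor)
  (a b : cantor) : Prop :=
  forall k, exists n c, D n c /\ agree k c a /\ agree k (f n c) b.

Definition perfect_cantor : Prop :=
  forall (a : cantor) k, exists b, agree k a b /\ b <> a.

Definition strongly_complex (D : nat -> cantor -> Prop) (f : nat -> cantor -> cantor) : Prop :=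
  [/\ (exists a : cantor, True) /\ perfect_cantor,
      (forall n, [/\ clopen (D n), clopen (image (D n) (f n)),
                     continuous_on (D n) (f n) & open_map_on (D n) (f n)]),
      (forall a, in_closure_graphs D f a a /\ (forall n, D n a -> f n a <> a))
    & (forall n U, is_open U -> (forall a, U a -> D n a) -> (exists a, U a) ->
          ~ countable_to_one_on U (f n))].

(* psi n : n-th finite binary sequence in the order by length then
   lexicographically (0 < 1): the l = floor(log2 (n+1)) bits, most
   significant first, of (n+1) - 2^l. *)
Definition psi (n : nat) : seq bool :=
  let l := trunc_log 2 n.+1 in
  let r := n.+1 - 2 ^ l in
  [seq odd (r %/ 2 ^ (l - 1 - i)) | i <- iota 0 l].

Fixpoint q (n : nat) : nat :=
  match n with 0 => 0 | n'.+1 => 3 * 2 ^ (q n') end.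

Definition t (n : nat) : seq bool := psi n ++ nseq (2 ^ q n - size (psi n)) false.

Definition inN (s : seq bool) (a : cantor) : bool :=
  all (fun i => a i == nth false s i) (iota 0 (size s)).

Definition inP (L k : nat) : Prop := exists p l, l < L - 2 /\ k = 2 ^ p * 3 ^ l.
Definition inM (L j : nat) : Prop := exists k, 1 <= k /\ ~ inP L k /\ j = 2 ^ 31 * 3 * k.

Definition dec (P : Prop) : bool := if excluded_middle_informative P then true else false.

Definition theta (L j : nat) : nat :=
  if L == 1 then 2 * j + 1
  else if dec (inM L j) then 3 * j + 3
  else if dec (inM L (j - 1)) then 3 * j - 3
  else 3 * j.

Definition theta_n (L n k : nat) : nat :=
  if (0 < k) && (2 ^ q n %| k) then 2 ^ q n * theta L (k %/ 2 ^ q n) else k.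

(* g^L_n; its domain is N_{t_n 0} *)
Definition g (L n : nat) (a : cantor) : cantor :=
  fun k => if k == 2 ^ q n then true else a (theta_n L n k).

Definition domg (n : nat) (a : cantor) : bool := inN (rcons (t n) false) a.

Definition DL (L n : nat) (a : cantor) : Prop :=
  domg n a /\
  (L != 1 -> forall m, m <= n -> a (2 ^ q n * 3 ^ m) <> a (2 ^ q n * 3 ^ m.+1)).

(* partial composition g_s = g_{s(0)} o ... o g_{s(|s|-1)} ; None = undefined *)
Definition gs (L : nat) (s : seq nat) (a : cantor) : option cantor :=
  foldr (fun n o => match o with
                    | Some b => if domg n b then Some (g L n b) else None
                    | None => None end) (Some a) s.

Definition sminus (s : seq nat) : seq nat := take (size s).-1 s.

From Pilot Require Import Defs.
From mathcomp Require Import all_boot zify.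
From Stdlib Require Import ClassicalEpsilon FunctionalExtensionality.
Set Implicit Arguments. Unset Strict Implicit. Unset Printing Implicit Defensive.

(* Write Q n for 2 ^ q_n. The map g_n copies coordinate theta_n k of its
   argument to coordinate k and puts 1 at Q n. For L >= 2, theta j = 3 swapM j
   where swapM exchanges j and j + 1 for j in M_L; so theta_n is injective, moves
   only the positive multiples of Q n, and never produces Q n j with
   j = 2 (mod 6). Hence g_n is continuous and open with clopen image, every
   fibre over an open set contains a copy of 2^omega written on the unread
   coordinates, and the diagonal lies in the closure of the graphs because every
   binary word is a prefix of some t_n.
   For (b) and (c) follow a coordinate of g_s a = g_(s^-) (g_z a) back to the
   coordinate of a it is read from. Coordinate Q z is read from Q z 3^(|s|-1) by
   g_(s^-) and from Q z 3^|s| by g_s, and these bits differ on D^L_z. For (c)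
   the coordinate read by g_(s^-) is never a positive multiple of Q z, so g_z
   is invisible: each of the L maps leaves it alone, sends it to an odd multiple
   of its Q n (out of reach of the later maps), or multiplies it by 3, and after
   L factors 3 the gap q_n + 31 <= q_z would put the corresponding j into M_L. *)

Local Notation Q n := (2 ^ q n).

Definition pos_mult (d k : nat) : bool := (0 < k) && (d %| k).

Lemma pos_mult_dvdn d d' k : d %| d' -> pos_mult d' k -> pos_mult d k.
Proof. by move=> dd' /andP [k0 /(dvdn_trans dd') dk]; rewrite /pos_mult k0. Qed.

Lemma decP (P : Prop) : reflect P (dec P).
Proof. by rewrite /dec; case: excluded_middle_informative => h; constructor. Qed.

Lemma Q_gt0 n : 0 < Q n. Proof. by rewrite expn_gt0. Qed.

Lemma ltn_q : {homo q : m n / m < n}.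
Proof.
apply: homo_ltn => [? ? ?|n]; first exact: ltn_trans.
by have := ltn_expl (q n) (isT : 1 < 2); rewrite /=; lia.
Qed.

Lemma leq_q : {homo q : m n / m <= n}.
Proof. by move=> m n; rewrite leq_eqVlt => /predU1P [-> //|/ltn_q/ltnW]. Qed.

Lemma leq_qn n : n <= q n.
Proof. by elim: n => // n IH; have := ltn_q (ltnSn n); lia. Qed.

Lemma ltn_Q n : n < Q n.
Proof. by have := ltn_expl (q n) (isT : 1 < 2); have := leq_qn n; lia. Qed.

Lemma dvdn_Q m n : m <= n -> Q m %| Q n.
Proof. by move=> /leq_q; apply: dvdn_exp2l. Qed.

Lemma dvdn_Q_mul2 m n : m < n -> Q m * 2 %| Q n.
Proof. by move=> /ltn_q hmn; rewrite -expnSr; apply: dvdn_exp2l. Qed.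

Lemma q_gap n z : 3 <= z -> n < z -> q n + 31 <= q z.
Proof.
move=> z3 nz; have -> : z = z.-1.+1 by lia.
have hn : q n <= q z.-1 by apply: leq_q; lia.
have h24 : q 2 <= q z.-1 by apply: leq_q; lia.
have {}h24 : 24 <= q z.-1 := h24.
rewrite /=; move: (q z.-1) h24 hn => x x24 hn.
have : 2 ^ 5 <= 2 ^ x by rewrite leq_exp2l //; lia.
by have := ltn_expl x (isT : 1 < 2); lia.
Qed.

Lemma Q_pow3_neq n m : 0 < m -> Q n * 3 ^ m != Q n.
Proof.
move=> m0; rewrite -{2}[Q n]muln1 eqn_pmul2l ?Q_gt0 //.
by rewrite -(expn0 3) eqn_exp2l //; lia.
Qed.

Lemma coprime_pow23 d e : coprime (2 ^ d) (3 ^ e).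
Proof. exact/coprimeXl/coprimeXr. Qed.

Lemma two31_gt0 : 0 < 2 ^ 31. Proof. by rewrite expn_gt0. Qed.
Lemma dvdn2_two31 : 2 %| 2 ^ 31. Proof. by rewrite -{1}(expn1 2) dvdn_exp2l. Qed.

(* Proofs about M_L generalize [2 ^ 31] before closing goals by computation,
   which would evaluate it in unary. *)
Section MSet.
Variable L : nat.

Lemma inM_dvd j : inM L j -> (2 ^ 31 * 3 %| j) && (0 < j).
Proof.
case=> k [k1 [_ ->]]; move: (2 ^ 31) two31_gt0 => T T0.
by rewrite dvdn_mulr // !muln_gt0 T0 k1.
Qed.

Lemma inM_gt0 j : inM L j -> 0 < j.
Proof. by case/inM_dvd/andP. Qed.

Lemma inM_even j : inM L j -> 2 %| j.
Proof.
case/inM_dvd/andP => h _; apply: dvdn_trans h.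
by move: (2 ^ 31) dvdn2_two31 => T T2; apply: dvdn_mulr.
Qed.

Lemma inM_dvd3 j : inM L j -> 3 %| j.
Proof. by case/inM_dvd/andP => h _; apply: dvdn_trans h; apply: dvdn_mull. Qed.

Lemma inM_succ j : inM L j -> ~ inM L j.+1.
Proof. by move=> /inM_even h1 /inM_even; rewrite -(addn1 j) (dvdn_addr 1 h1). Qed.

Lemma notM_pred p j : (p = 2 \/ p = 3) -> p %| j -> ~ inM L j.-1.
Proof.
move=> hp hj hM; have j0 : 0 < j by have := inM_gt0 hM; lia.
have hd : p %| j.-1 by case: hp => ->; [exact: inM_even hM | exact: inM_dvd3 hM].
by move: hj; rewrite -(prednK j0) -(addn1 j.-1) (dvdn_addr 1 hd); case: hp => ->.
Qed.

Lemma inM_of_dvd j e : 2 <= L -> L <= e.+1 -> 0 < j ->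
  2 ^ 31 %| j -> 3 ^ e %| j -> inM L j.
Proof.
move=> L2 Le j0 h2 h3.
have h3' : 3 %| j by apply: dvdn_trans h3; rewrite -{1}(expn1 3) dvdn_exp2l; lia.
have hC : 2 ^ 31 * 3 %| j.
  rewrite Gauss_dvd; last exact: coprimeXl.
  by apply/andP; split.
exists (j %/ (2 ^ 31 * 3)); split; [|split].
- rewrite divn_gt0; first exact: dvdn_leq j0 hC.
  by rewrite muln_gt0 two31_gt0.
- move=> [p [l [lL E]]].
  have : 3 ^ e %| 2 ^ 31 * 3 * (2 ^ p * 3 ^ l).
    by rewrite -E (mulnC (2 ^ 31 * 3)) (divnK hC).
  rewrite mulnACA -expnD -expnS Gauss_dvdr; last by rewrite coprime_sym coprime_pow23.
  rewrite dvdn_Pexp2l; [lia | by []].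
- by rewrite (mulnC (2 ^ 31 * 3)) (divnK hC).
Qed.

Lemma notM_pow23 d i : i <= L - 2 -> ~ inM L (2 ^ d * 3 ^ i).
Proof.
move=> iL [k [k1 [hP E]]]; apply: hP.
have h2 : 2 ^ 31 %| 2 ^ d * 3 ^ i.
  by rewrite E -mulnA; apply: dvdn_mulr; apply: dvdnn.
have h3 : 3 %| 2 ^ d * 3 ^ i by rewrite E mulnAC; apply: dvdn_mull; apply: dvdnn.
rewrite (Gauss_dvdl _ (coprime_pow23 31 i)) dvdn_Pexp2l in h2; last by [].
have i1 : 1 <= i.
  by case: i {iL E} h3 => //; rewrite expn0 muln1 Euclid_dvdX.
exists (d - 31), i.-1; split; first lia.
have Ed : 2 ^ d = 2 ^ 31 * 2 ^ (d - 31) by rewrite -expnD subnKC.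
have Ei : 3 ^ i = 3 * 3 ^ i.-1 by rewrite -expnS prednK.
move: E; rewrite Ed Ei.
move: (2 ^ 31) two31_gt0 (2 ^ (d - 31)) (3 ^ i.-1) => T T0 x y E.
apply/eqP; rewrite -(eqn_pmul2l (_ : 0 < T * 3)) ?muln_gt0 ?T0 // -E.
by rewrite mulnACA.
Qed.

(* For [L != 1], theta j is 3 times the image of j under the involution
   exchanging j and j + 1 for every j in M_L. *)
Definition swapM j :=
  if dec (inM L j) then j.+1 else if dec (inM L j.-1) then j.-1 else j.

Lemma swapM_M j : inM L j -> swapM j = j.+1.
Proof. by rewrite /swapM; case: decP. Qed.

Lemma swapM_M1 j : ~ inM L j -> inM L j.-1 -> swapM j = j.-1.
Proof. by rewrite /swapM; case: decP => // _; case: decP. Qed.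

Lemma swapM_id j : ~ inM L j -> ~ inM L j.-1 -> swapM j = j.
Proof. by rewrite /swapM; case: decP => // _; case: decP. Qed.

Lemma swapMK : involutive swapM.
Proof.
move=> j; case: (decP (inM L j)) => [hj|nj].
  by rewrite (swapM_M hj) swapM_M1 //; exact: inM_succ hj.
case: (decP (inM L j.-1)) => [hj|nj']; last by rewrite !swapM_id.
have j0 : 0 < j by have := inM_gt0 hj; lia.
by rewrite (swapM_M1 nj hj) (swapM_M hj) prednK.
Qed.

Lemma theta_swapM j : L != 1 -> theta L j = 3 * swapM j.
Proof.
rewrite /theta /swapM => /negbTE ->; rewrite subn1.
case: decP => // _; first lia.
case: decP => // hM; have := inM_gt0 hM; lia.
Qed.

Lemma swapM_gt0 j : 0 < j -> 0 < swapM j.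
Proof.
rewrite /swapM; case: decP => // _; case: decP => // /inM_gt0; lia.
Qed.

Lemma theta_inj j j' : theta L j = theta L j' -> j = j'.
Proof.
case: (eqVneq L 1) => [->|L1]; first by rewrite /theta /=; lia.
rewrite !theta_swapM // => /eqP; rewrite eqn_pmul2l // => /eqP.
by move=> E; rewrite -[j]swapMK E swapMK.
Qed.

Lemma theta_bounds j : 0 < j ->
  [/\ 3 <= theta L j, j <= theta L j & theta L j <= 3 * j + 3].
Proof.
move=> j0; case: (eqVneq L 1) => [->|L1]; first by rewrite /theta /=; split; lia.
rewrite theta_swapM //; have := swapM_gt0 j0; rewrite /swapM.
by case: decP => _; [|case: decP => _]; split; lia.
Qed.

Lemma theta_mod6 j : theta L j %% 6 != 2.
Proof.
by case: (eqVneq L 1) => [->|L1]; [rewrite /theta /= | rewrite theta_swapM //]; lia.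
Qed.

Lemma theta1 : theta L 1 = 3.
Proof.
case: (eqVneq L 1) => [->|L1] //; rewrite theta_swapM // swapM_id //.
  by move/inM_even.
by move/inM_gt0.
Qed.

Lemma theta_3j j : L != 1 -> ~ inM L j -> 3 %| j -> theta L j = 3 * j.
Proof.
by move=> L1 jM j3; rewrite theta_swapM // swapM_id //; apply: (@notM_pred 3); [right|].
Qed.

Lemma dvdn3_theta j : L != 1 -> 3 %| theta L j.
Proof. by move=> L1; rewrite theta_swapM // dvdn_mulr. Qed.

Lemma dvdn_pow3_theta e j : L != 1 -> ~ inM L j -> 3 ^ e %| j -> 3 ^ e.+1 %| theta L j.
Proof.
move=> L1 jM; case: e => [_|e j3]; first exact: dvdn3_theta.
have j3' : 3 %| j by apply: dvdn_trans j3; rewrite expnS dvdn_mulr.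
by rewrite theta_3j // expnS dvdn_pmul2l.
Qed.

Lemma theta_pow3 m : L != 1 -> 0 < m -> theta L (3 ^ m) = 3 ^ m.+1.
Proof.
move=> L1 m0; rewrite theta_3j -?expnS //; last by rewrite -(prednK m0) expnS dvdn_mulr.
by move/inM_even; rewrite Euclid_dvdX.
Qed.

End MSet.

Section ThetaN.
Variables L n : nat.

Lemma theta_n_id k : ~~ pos_mult (Q n) k -> theta_n L n k = k.
Proof. by rewrite /theta_n /pos_mult => /negbTE ->. Qed.

Lemma theta_nE j : 0 < j -> theta_n L n (Q n * j) = Q n * theta L j.
Proof.
by move=> j0; rewrite /theta_n muln_gt0 Q_gt0 j0 dvdn_mulr // mulKn ?Q_gt0.
Qed.

Variant theta_n_spec k : nat -> bool -> Prop :=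
  | ThetaNMult j of 0 < j & k = Q n * j : theta_n_spec k (Q n * theta L j) true
  | ThetaNFixed of ~~ pos_mult (Q n) k : theta_n_spec k k false.

Lemma theta_nP k : theta_n_spec k (theta_n L n k) (pos_mult (Q n) k).
Proof.
case h: (pos_mult (Q n) k); last by rewrite theta_n_id ?h //; constructor; rewrite h.
case/andP: h => k0 /dvdnP [j Ek]; rewrite mulnC in Ek.
have j0 : 0 < j by move: k0; rewrite Ek muln_gt0 => /andP [].
by rewrite Ek theta_nE //; constructor.
Qed.

Lemma leq_theta_n k : k <= theta_n L n k.
Proof.
case: theta_nP => // j j0 ->; rewrite leq_mul2l.
by case: (theta_bounds L j0) => _ -> _; rewrite orbT.
Qed.

Lemma theta_n_le k : theta_n L n k <= 3 * k + 3 * Q n.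
Proof.
case: theta_nP => [j j0 ->|]; last lia.
case: (theta_bounds L j0) => _ _ /(leq_mul (leqnn (Q n))); lia.
Qed.

Lemma pos_mult_theta j : 0 < j -> pos_mult (Q n) (Q n * theta L j).
Proof.
move=> j0; rewrite /pos_mult dvdn_mulr // muln_gt0 Q_gt0.
by case: (theta_bounds L j0) => h3 _ _; lia.
Qed.

Lemma theta_n_inj : injective (theta_n L n).
Proof.
move=> k k'.
case: (theta_nP k) => [j j0 ->|nk]; case: (theta_nP k') => [j' j0' ->|nk'] //.
- by move/eqP; rewrite eqn_pmul2l ?Q_gt0 // => /eqP /theta_inj ->.
- by move=> E; move: nk'; rewrite -E pos_mult_theta.
- by move=> E; move: nk; rewrite E pos_mult_theta.
Qed.

Lemma theta_n_small k : k < Q n -> theta_n L n k = k.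
Proof. by move=> kQ; apply: theta_n_id; apply/negP => /andP [k0 /(dvdn_leq k0)]; lia. Qed.

Lemma theta_n_Q : theta_n L n (Q n) = 3 * Q n.
Proof. by rewrite -{1}[Q n]muln1 theta_nE // theta1 mulnC. Qed.

Lemma theta_n_neq_Q k : theta_n L n k != Q n.
Proof.
apply/eqP; case: theta_nP => [j j0 _|nk E]; last by move: nk; rewrite E /pos_mult Q_gt0 dvdnn.
case: (theta_bounds L j0) => h3 _ _ /eqP.
by rewrite -{2}[Q n]muln1 eqn_pmul2l ?Q_gt0 //; lia.
Qed.

Lemma theta_n_pow3 m : L != 1 -> 0 < m ->
  theta_n L n (Q n * 3 ^ m) = Q n * 3 ^ m.+1.
Proof. by move=> L1 m0; rewrite theta_nE ?expn_gt0 // theta_pow3. Qed.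

Definition theta_n_inv (p : nat) : option nat :=
  match excluded_middle_informative (exists k, k != Q n /\ theta_n L n k = p) with
  | left H => Some (proj1_sig (constructive_indefinite_description _ H))
  | right _ => None end.

Lemma theta_n_inv_Some p k :
  theta_n_inv p = Some k -> k != Q n /\ theta_n L n k = p.
Proof.
rewrite /theta_n_inv; case: excluded_middle_informative => // H [<-].
exact: proj2_sig (constructive_indefinite_description _ H).
Qed.

Lemma theta_n_inv_None p : (forall k, theta_n L n k = p -> k = Q n) ->
  theta_n_inv p = None.
Proof.
by case E: theta_n_inv => [k|] // hp; case: (theta_n_inv_Some E) => /eqP kQ /hp.
Qed.

Lemma theta_n_invK k : k != Q n -> theta_n_inv (theta_n L n k) = Some k.
Proof.
move=> kQ; rewrite /theta_n_inv; case: excluded_middle_informative => [H|[]].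
  by case: (constructive_indefinite_description _ H) => k' /= [_ /theta_n_inj ->].
by exists k.
Qed.

Definition ginv (d b : cantor) : cantor :=
  fun p => if theta_n_inv p is Some k then b k else d p.

Lemma ginv_theta_n d b k : k != Q n -> ginv d b (theta_n L n k) = b k.
Proof. by move=> kQ; rewrite /ginv theta_n_invK. Qed.

Lemma ginvK d b : b (Q n) = true -> g L n (ginv d b) = b.
Proof.
move=> bQ; apply: functional_extensionality => k; rewrite /g.
by case: eqP => [->|/eqP kQ]; rewrite ?ginv_theta_n.
Qed.

Lemma ginv_gE d a p :
  ginv d (g L n a) p = if theta_n_inv p is Some _ then a p else d p.
Proof.
rewrite /ginv; case E: theta_n_inv => [k|] //.
by case: (theta_n_inv_Some E) => /negbTE kQ <-; rewrite /g kQ.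
Qed.

Lemma ginv_g a : ginv a (g L n a) = a.
Proof.
by apply: functional_extensionality => p; rewrite ginv_gE; case: theta_n_inv.
Qed.

Lemma agree_ginv K d d' b b' :
  agree K d d' -> agree K b b' -> agree K (ginv d b) (ginv d' b').
Proof.
move=> hd hb p pK; rewrite /ginv; case E: theta_n_inv => [k|]; last exact: hd.
apply: hb; case: (theta_n_inv_Some E) => _ Ek.
by have := leq_theta_n k; lia.
Qed.

End ThetaN.

Lemma size_psi n : size (psi n) = trunc_log 2 n.+1.
Proof. by rewrite /psi size_map size_iota. Qed.

Lemma size_psi_le n : size (psi n) <= n.
Proof.
rewrite size_psi; have := trunc_logP (isT : 1 < 2) (ltn0Sn n).
by have := ltn_expl (trunc_log 2 n.+1) (isT : 1 < 2); lia.
Qed.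

Lemma size_t n : size (t n) = Q n.
Proof. by rewrite /t size_cat size_nseq; have := size_psi_le n; have := ltn_Q n; lia. Qed.

Lemma domgP n a :
  domg n a <-> forall i, i <= Q n -> a i = nth false (rcons (t n) false) i.
Proof.
rewrite /domg /inN size_rcons size_t; split.
- by move=> /allP h i iQ; apply/eqP; apply: h; rewrite mem_iota; lia.
- by move=> h; apply/allP => i; rewrite mem_iota => iQ; apply/eqP; apply: h; lia.
Qed.

Lemma domg_Q n a : domg n a -> a (Q n) = false.
Proof. by move/domgP => ->; rewrite // nth_rcons size_t ltnn eqxx. Qed.

Lemma domg_small n a i : domg n a -> i < Q n -> a i = nth false (t n) i.
Proof. by move/domgP => h iQ; rewrite h ?nth_rcons ?size_t ?iQ //; lia. Qed.

Lemma DL_ext L n a b :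
  (forall i, i <= Q n -> a i = b i) ->
  (L != 1 -> forall m, m <= n.+1 -> a (Q n * 3 ^ m) = b (Q n * 3 ^ m)) ->
  DL L n a -> DL L n b.
Proof.
move=> hi hm [da ca]; split => [|L1 m mn].
  by apply/domgP => i iQ; rewrite -hi //; move/domgP: da; apply.
by rewrite -!hm //; [exact: ca | lia].
Qed.

Lemma DL_bits L n a : DL L n a -> a (Q n) = false /\ (L != 1 -> a (3 * Q n) = true).
Proof.
case=> da ca; split => [|L1]; first exact: domg_Q.
by have := ca L1 0 (leq0n _); rewrite expn0 muln1 expn1 mulnC (domg_Q da); case: (a _).
Qed.

Definition depends_on_prefix (K : nat) (P : cantor -> Prop) : Prop :=
  forall a b, agree K a b -> P a -> P b.

Lemma agree_sym K a b : agree K a b -> agree K b a.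
Proof. by move=> h i iK; rewrite h. Qed.

Lemma agree_le K K' a b : K <= K' -> agree K' a b -> agree K a b.
Proof. by move=> KK h i iK; apply: h; lia. Qed.

Lemma clopen_prefix K P : depends_on_prefix K P -> clopen P.
Proof.
move=> hP; split=> a Pa; exists K => b ab; first exact: hP Pa.
by move=> Pb; apply: Pa; apply: hP (agree_sym ab) Pb.
Qed.

Lemma DL_prefix L n : depends_on_prefix (Q n * 3 ^ n.+1).+1 (DL L n).
Proof.
move=> a b ab; apply: DL_ext => [i iQ|_ m mn]; apply: ab.
  have : Q n <= Q n * 3 ^ n.+1 by rewrite leq_pmulr ?expn_gt0.
  lia.
have : 3 ^ m <= 3 ^ n.+1 by rewrite leq_pexp2l.
by rewrite -(leq_pmul2l (Q_gt0 n)); lia.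
Qed.

Lemma perfect : perfect_cantor.
Proof.
move=> a k; exists (fun i => if i == k then ~~ a k else a i); split.
  by move=> i ik; case: eqP => // E; lia.
by move/(f_equal (fun f => f k)); rewrite eqxx; case: (a k).
Qed.

Section GMap.
Variables L n : nat.

(* The values at [Q n] and [3 * Q n], the two coordinates not read by
   [g L n], of every point of [DL L n] (when [L != 1]). *)
Let d0 : cantor := fun p => p == 3 * Q n.

Lemma ginv_g_DL a : DL L n a -> DL L n (ginv L n d0 (g L n a)).
Proof.
move=> Da; have [aQ a3Q] := DL_bits Da.
have invQ : theta_n_inv L n (Q n) = None.
  by apply: theta_n_inv_None => k /eqP; rewrite (negbTE (theta_n_neq_Q _ _ _)).
have inv3Q : theta_n_inv L n (3 * Q n) = None.
  by apply: theta_n_inv_None => k; rewrite -(theta_n_Q L n) => /theta_n_inj.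
have Qd0 : d0 (Q n) = false by apply/eqP; have := Q_gt0 n; lia.
apply: DL_ext Da => [i iQ|L1 [|[|m]] _]; rewrite ginv_gE.
- case: (ltnP i (Q n)) => [iQ'|Qi].
    have iQn : i != Q n by rewrite neq_ltn iQ'.
    by move: (@theta_n_invK L n i iQn); rewrite theta_n_small // => ->.
  have -> : i = Q n by lia.
  by rewrite invQ aQ Qd0.
- by rewrite expn0 muln1 invQ aQ Qd0.
- by rewrite expn1 mulnC inv3Q /d0 eqxx a3Q.
- by rewrite -(theta_n_pow3 n L1) // theta_n_invK // Q_pow3_neq.
Qed.

Lemma image_g b :
  Defs.image (DL L n) (g L n) b <-> b (Q n) = true /\ DL L n (ginv L n d0 b).
Proof.
split; last by case=> bQ Db; exists (ginv L n d0 b); rewrite ginvK.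
by case=> a [Da <-]; split; [rewrite /g eqxx | exact: ginv_g_DL].
Qed.

Lemma image_g_prefix :
  depends_on_prefix (Q n * 3 ^ n.+1).+1 (Defs.image (DL L n) (g L n)).
Proof.
have QK : Q n < (Q n * 3 ^ n.+1).+1 by rewrite ltnS leq_pmulr ?expn_gt0.
move=> b b' bb' /image_g [bQ Db]; apply/image_g; split; first by rewrite -bb'.
by apply: DL_prefix Db; apply: agree_ginv.
Qed.

Lemma g_continuous : continuous_on (DL L n) (g L n).
Proof.
move=> a _ k; exists (3 * k + 3 * Q n) => b _ ab i ik; rewrite /g.
by case: eqP => // _; apply: ab; have := theta_n_le L n i; lia.
Qed.

Lemma g_open : open_map_on (DL L n) (g L n).
Proof.
move=> U hU _ _ [a [Ua <-]]; have [K hK] := hU a Ua.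
exists (K + (Q n).+1) => b' gb'; exists (ginv L n a b'); split.
  apply: hK; rewrite -{1}(ginv_g L n a); apply: agree_ginv => //.
  by apply: agree_le gb'; lia.
by apply: ginvK; rewrite -gb' ?/g ?eqxx //; lia.
Qed.

End GMap.

Lemma cantor_not_inj (h : cantor -> nat) : ~ injective h.
Proof.
move=> h_inj.
pose f (m : nat) : cantor :=
  match excluded_middle_informative (exists x, h x = m) with
  | left e => proj1_sig (constructive_indefinite_description _ e)
  | right _ => fun _ => false end.
pose d : cantor := fun m => ~~ f m m.
have fd : f (h d) = d.
  rewrite /f; case: excluded_middle_informative => [e|[]]; last by exists d.
  by case: (constructive_indefinite_description _ e) => x /= /h_inj.
by have := f_equal (fun u => u (h d)) fd; rewrite /d; case: (f _ _).
Qed.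

Lemma g_unread L n a b :
  (forall p, ~~ (pos_mult (Q n) p && (p %/ Q n %% 6 == 2)) -> a p = b p) ->
  g L n a = g L n b.
Proof.
move=> ab; apply: functional_extensionality => k; rewrite /g.
case: eqP => // _; apply: ab; case: (theta_nP L n k) => [j j0 _|nk].
  by rewrite mulKn ?Q_gt0 // (negbTE (theta_mod6 L j)) andbF.
by rewrite (negbTE nk).
Qed.

Lemma g_not_countable_to_one L n U :
  is_open U -> (exists a, U a) -> ~ countable_to_one_on U (g L n).
Proof.
move=> hU [a0 Ua0] /(_ (g L n a0)) [h h_inj]; have [K hK] := hU a0 Ua0.
pose E (x : cantor) : cantor := fun p =>
  if [&& pos_mult (Q n) p, p %/ Q n %% 6 == 2 & 6 * K <= p %/ Q n]
  then x (p %/ Q n %/ 6 - K) else a0 p.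
have Ea0 x : agree K a0 (E x).
  move=> p pK; rewrite /E; case: ifP => // /and3P [_ _].
  by have := leq_div p (Q n); lia.
have gE x : g L n (E x) = g L n a0.
  apply: g_unread => p hp; rewrite /E; case: ifP => // /and3P [h1 h2 _].
  by rewrite h1 h2 in hp.
have Ex x j : E x (Q n * (6 * (K + j) + 2)) = x j.
  rewrite /E /pos_mult mulKn ?Q_gt0 // dvdn_mulr // muln_gt0 Q_gt0 /=.
  by rewrite ifT; [congr x | apply/andP]; lia.
apply: (@cantor_not_inj (fun x => h (E x))) => x y /h_inj Exy.
apply: functional_extensionality => j; rewrite -Ex -[y j]Ex Exy //.
- by split; [exact: hK (Ea0 x) | exact: gE].
- by split; [exact: hK (Ea0 y) | exact: gE].
Qed.

Fixpoint binval (a : cantor) (k : nat) : nat :=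
  if k is k'.+1 then 2 * binval a k' + a k' else 0.

Lemma binval_lt a k : binval a k < 2 ^ k.
Proof. by elim: k => //= k IH; rewrite expnS; case: (a k) => /=; lia. Qed.

Lemma odd_binval a k i : i < k -> odd (binval a k %/ 2 ^ (k - 1 - i)) = a i.
Proof.
elim: k i => // k IH i /=; rewrite ltnS leq_eqVlt => /predU1P [->|ik].
  by rewrite subSS subn0 subnn expn0 divn1 oddD oddM; case: (a k).
have -> : k.+1 - 1 - i = (k - 1 - i).+1 by lia.
rewrite expnS divnMA; have -> : (2 * binval a k + a k) %/ 2 = binval a k.
  by case: (a k) => /=; lia.
exact: IH.
Qed.

Lemma psi_binval a k : psi (2 ^ k - 1 + binval a k) = mkseq a k.
Proof.
have k0 : 0 < 2 ^ k by rewrite expn_gt0.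
have bk := binval_lt a k.
rewrite /psi (_ : (2 ^ k - 1 + binval a k).+1 = 2 ^ k + binval a k); last lia.
have -> : trunc_log 2 (2 ^ k + binval a k) = k.
  by apply: trunc_log_eq => //; rewrite expnS; apply/andP; split; lia.
rewrite addKn; apply/eq_in_map => i; rewrite mem_iota add0n => ik.
exact: odd_binval.
Qed.

Lemma DL_extend L n a k : psi n = mkseq a k -> exists c, DL L n c /\ agree k a c.
Proof.
move=> psi_n; have kQ : k < Q n.
  by have := size_psi_le n; rewrite psi_n size_mkseq; have := ltn_Q n; lia.
pose c p := if p < k then a p else (Q n %| p) && odd (logn 3 (p %/ Q n)).
have cQ m : c (Q n * 3 ^ m) = odd m.
  rewrite /c ifF ?dvdn_mulr ?mulKn ?Q_gt0 ?pfactorK //.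
  by apply/negbTE; rewrite -leqNgt; have := leq_pmulr (Q n) (expn_gt0 3 m); lia.
exists c; split=> [|i ik]; last by rewrite /c ik.
split=> [|_ m _]; last by rewrite !cQ /=; case: (odd m).
apply/domgP => i iQ; rewrite nth_rcons size_t.
case: ltngtP iQ => // [iQ _|-> _]; last by have := cQ 0; rewrite expn0 muln1.
rewrite /t nth_cat psi_n size_mkseq /c; case: ltnP => [ik|ki].
  by rewrite nth_mkseq.
rewrite nth_nseq if_same; case: (posnP i) => [->|i0]; first by rewrite div0n logn0 andbF.
by apply/negbTE/nandP; left; apply/negP => /(dvdn_leq i0); lia.
Qed.

Lemma graphs_closure L a : in_closure_graphs (fun n => DL L n) (fun n => g L n) a a.
Proof.
move=> k; set n := 2 ^ k - 1 + binval a k.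
have [c [Dc ac]] := DL_extend L (psi_binval a k : psi n = _).
exists n, c; split=> //; split=> i ik; first by rewrite ac.
have iQ : i < Q n by have := ltn_Q n; have := ltn_expl k (isT : 1 < 2); lia.
by rewrite /g (ltn_eqF iQ) theta_n_small // ac.
Qed.

Lemma g_no_fixpoint L n a : DL L n a -> g L n a <> a.
Proof. by case=> /domg_Q aQ _ /(f_equal (fun f => f (Q n))); rewrite aQ /g eqxx. Qed.

(* [gs_index L s k = Some p] when coordinate [k] of [gs L s a] is [a p], and
   [None] when it is [true]. *)
Fixpoint gs_index (L : nat) (s : seq nat) (k : nat) : option nat :=
  if s is n :: s' then if k == Q n then None else gs_index L s' (theta_n L n k)
  else Some k.

Lemma gs_indexP L s a b : gs L s a = Some b ->
  forall k, b k = if gs_index L s k is Some p then a p else true.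
Proof.
elim: s b => [|n s IH] b /=; first by case=> <-.
case E: (gs L s a) => [b'|] //; case: (domg n b') => // -[<-] k.
by rewrite /g; case: eqP => // _; apply: IH.
Qed.

Lemma gs_index_rcons L s z k : gs_index L (rcons s z) k =
  if gs_index L s k is Some p then
    (if p == Q z then None else Some (theta_n L z p))
  else None.
Proof. by elim: s k => [|n s IH] k //=; case: eqP. Qed.

Lemma sminus_rcons s z : sminus (rcons s z) = s.
Proof. by rewrite /sminus size_rcons -cats1 take_size_cat. Qed.

Lemma gs_index_id L d s r : (forall m, m \in s -> d %| Q m) -> ~~ pos_mult d r ->
  gs_index L s r = Some r.
Proof.
elim: s => //= n s IH ds dr; have dn : d %| Q n by apply: ds; rewrite mem_head.
rewrite ifF; last by apply/eqP => rQ; move: dr; rewrite rQ /pos_mult Q_gt0 dn.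
rewrite theta_n_id; last by apply: contra dr; apply: pos_mult_dvdn.
by apply: IH => // m ms; apply: ds; rewrite inE ms orbT.
Qed.

Section Avoid.
Variables L z : nat.
Hypothesis L2 : 2 <= L.
Let L1 : L != 1. Proof. by rewrite neq_ltn L2 orbT. Qed.

Lemma gs_index_fixed n s r p : all (ltn n) s -> q n < q z ->
  ~~ pos_mult (Q n) r -> gs_index L (n :: s) r = Some p -> ~~ pos_mult (Q z) p.
Proof.
move=> ns nz rn; rewrite (@gs_index_id _ (Q n)) // => [[<-]|m].
  by apply: contra rn; apply: pos_mult_dvdn; apply: dvdn_exp2l; lia.
rewrite inE => /predU1P [->|ms] //; apply/dvdn_Q/ltnW.
by move/allP: ns => /(_ m ms).
Qed.

(* A coordinate sent into [Q n * M_L] goes to an odd multiple of [Q n], which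
   no later map moves. *)
Lemma gs_index_M n s j p : all (ltn n) s -> q n < q z -> inM L j ->
  gs_index L (n :: s) (Q n * j) = Some p -> ~~ pos_mult (Q z) p.
Proof.
move=> ns nz jM /=; have j2 := inM_even jM.
rewrite ifF; last first.
  apply/negbTE; rewrite -{2}[Q n]muln1 eqn_pmul2l ?Q_gt0 //.
  by apply: contraTneq j2 => ->.
rewrite (theta_nE L n (inM_gt0 jM)) theta_swapM // swapM_M //.
have odd_j : ~~ pos_mult (Q n * 2) (Q n * (3 * j.+1)).
  by rewrite /pos_mult dvdn_pmul2l ?Q_gt0 //; lia.
rewrite (@gs_index_id _ (Q n * 2)) // => [[<-]|m ms].
  by apply: contra odd_j; apply: pos_mult_dvdn; rewrite -expnSr dvdn_exp2l.
by apply: dvdn_Q_mul2; move/allP: ns => /(_ m ms).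
Qed.

(* Every map that moves the coordinate multiplies it by 3, so after [L] maps it
   carries a factor [3 ^ (L - 1)] besides the first factor [j]; landing on a
   multiple of [Q z] would also make [j] a multiple of [2 ^ 31], i.e. [j] in
   M_L, where theta is not [3 * j]. *)
Lemma gs_index_avoid s : pairwise ltn s -> (forall m, m \in s -> q m + 31 <= q z) ->
  forall r e p, 0 < size s -> 3 ^ e %| r -> L <= e + size s ->
  gs_index L s r = Some p -> ~~ pos_mult (Q z) p.
Proof.
elim: s => // n s IH; rewrite pairwise_cons => /andP [ns spw] sz r e p _ r3 Le.
have gap : q n + 31 <= q z by apply: sz; rewrite mem_head.
have nz : q n < q z by lia.
have [rn|rn] := boolP (pos_mult (Q n) r); last exact: gs_index_fixed ns nz rn.
case/andP: rn => r0 /dvdnP [j rE]; rewrite mulnC in rE; subst r.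
have j0 : 0 < j by rewrite muln_gt0 in r0; case/andP: r0.
case: (excluded_middle_informative (inM L j)) => [jM|jM].
  exact: gs_index_M ns nz jM.
rewrite /=; case: eqP => // _; rewrite theta_nE //.
have j3 : 3 ^ e %| j by move: r3; rewrite Gauss_dvdr // coprime_sym coprime_pow23.
have th3 : 3 ^ e.+1 %| theta L j by apply: dvdn_pow3_theta.
case: s IH ns spw sz Le => [|n' s] IH ns spw sz Le; last first.
  apply: (IH spw _ _ e.+1) => //; last by move: Le => /=; lia.
    by move=> m ms; apply: sz; rewrite inE ms orbT.
  exact: dvdn_mull.
move=> [<-]; apply/negP => /andP [_ Qz].
have e0 : 0 < e by move: Le => /=; lia.
have j3' : 3 %| j by apply: dvdn_trans j3; rewrite -{1}(expn1 3) dvdn_exp2l.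
have j2 : 2 ^ 31 %| j.
  have : Q n * 2 ^ 31 %| Q n * theta L j.
    by apply: dvdn_trans Qz; rewrite -expnD; apply: dvdn_exp2l.
  move: (coprimeXl 31 (isT : coprime 2 3)); rewrite (theta_3j L1 jM j3').
  move: (2 ^ 31) => T T3.
  by rewrite (dvdn_pmul2l (Q_gt0 n)) (Gauss_dvdr _ T3).
by apply: jM; apply: (inM_of_dvd L2 _ j0 j2 j3); move: Le => /=; lia.
Qed.
End Avoid.

Lemma sorted_rcons_ltn s z : sorted ltn (rcons s z) -> pairwise ltn s /\ all (ltn^~ z) s.
Proof.
rewrite sorted_pairwise; last exact: ltn_trans.
by rewrite -cats1 pairwise_cat allrel1r /= andbT => /andP [].
Qed.

Lemma size_ltn s z : pairwise ltn s -> all (ltn^~ z) s -> size s <= z.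
Proof.
move=> spw sz; rewrite -(size_iota 0 z); apply: uniq_leq_size.
  by apply: (sorted_uniq ltn_trans ltnn); rewrite sorted_pairwise //; exact: ltn_trans.
by move=> m ms; rewrite mem_iota; move/allP: sz => /(_ m ms).
Qed.

Lemma gs_index_pow3 L z s i : 2 <= L -> all (ltn^~ z) s -> i + size s <= L - 1 ->
  gs_index L s (Q z * 3 ^ i) = Some (Q z * 3 ^ (i + size s)).
Proof.
move=> L2; elim: s i => [|n s IH] i /=; first by rewrite addn0.
case/andP => nz sz isL; have qnz := ltn_q nz.
have QzE : Q z = Q n * 2 ^ (q z - q n) by rewrite -expnD subnKC //; lia.
have d0 : 0 < q z - q n by lia.
rewrite ifF; last first.
  apply/negbTE; have : Q n < Q z by rewrite ltn_exp2l.
  by have := leq_pmulr (Q z) (expn_gt0 3 i); lia.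
rewrite QzE -mulnA theta_nE ?muln_gt0 ?expn_gt0 // theta_swapM; last lia.
have jM : ~ inM L (2 ^ (q z - q n) * 3 ^ i) by apply: notM_pow23; lia.
have jM1 : ~ inM L (2 ^ (q z - q n) * 3 ^ i).-1.
  apply: (@notM_pred _ 2); first by left.
  by rewrite -(prednK d0) expnS -mulnA dvdn_mulr.
rewrite swapM_id // (mulnCA 3) -expnS mulnA -QzE IH ?addSnnS //; lia.
Qed.

Lemma psi1 : psi 1 = [:: false]. Proof. by vm_compute. Qed.
Lemma psi2 : psi 2 = [:: true]. Proof. by vm_compute. Qed.

(* The only chain [rcons s z] with [size s >= 2] and [z < 3]; the gap
   [q 1 + 31 <= q 2] fails, but [g_1 (g_2 a)] is never defined. *)
Lemma gs_012 L a : gs L [:: 0; 1; 2] a = None.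
Proof.
rewrite /=; case D2: (domg 2 a) => //; case D1: (domg 1 (g L 2 a)) => //.
have := domg_small D1 (Q_gt0 1); have := domg_small D2 (Q_gt0 2).
rewrite /g (ltn_eqF (Q_gt0 2)) theta_n_small ?Q_gt0 //.
by rewrite /t !nth_cat psi1 psi2 /= => ->.
Qed.

Lemma gs_rcons_eq L s z a b c :
  (forall k p, gs_index L s k = Some p -> ~~ pos_mult (Q z) p) ->
  gs L (rcons s z) a = Some b -> gs L s a = Some c -> b = c.
Proof.
move=> avoid hb hc; apply: functional_extensionality => k.
rewrite (gs_indexP hb) (gs_indexP hc) gs_index_rcons.
case E: gs_index => [p|] //; have zp := avoid k p E.
rewrite theta_n_id // ifF //; apply: contraNF zp => /eqP ->.
by rewrite /pos_mult Q_gt0 dvdnn.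
Qed.

Lemma gs_index_avoid_L1 n z k p : n < z ->
  gs_index 1 [:: n] k = Some p -> ~~ pos_mult (Q z) p.
Proof.
move=> nz /=; case: eqP => // _ [<-]; have Qn2 := dvdn_Q_mul2 nz.
case: (theta_nP 1 n k) => [j j0 _|kn].
  apply/negP => /andP [_ /(dvdn_trans Qn2)].
  by rewrite dvdn_pmul2l ?Q_gt0 // /theta /=; lia.
by apply: contra kn; apply: pos_mult_dvdn; apply: dvdn_trans Qn2; apply: dvdn_mulr.
Qed.

Lemma gs_sminus_eq L s a b c : 1 <= L -> sorted ltn s -> size s = L.+1 ->
  gs L s a = Some b -> gs L (sminus s) a = Some c -> b = c.
Proof.
move=> L0; case/lastP: s => [//|s z] hs; rewrite size_rcons sminus_rcons => -[sL] hb.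
move: (hb); apply: gs_rcons_eq => k p; have [spw sz] := sorted_rcons_ltn hs.
have Lz : L <= z by rewrite -sL; exact: size_ltn.
case: s sL spw sz hb {hs} => [|n [|n' s]] sL spw sz hb; move: sL => /= sL.
- by rewrite -sL in L0.
- by rewrite -sL; apply: gs_index_avoid_L1; rewrite /= andbT in sz.
case: (ltnP z 3) => [z2|z3].
  have [n0 n1] : n = 0 /\ n' = 1 by move: spw sz => /= /and3P [/andP [nn' _] _ _]; lia.
  have Es : s = [::] by case: s {spw sz hb} sL => //= m s; lia.
  have Ez : z = 2 by move: sL; rewrite Es /=; lia.
  by move: hb; rewrite n0 n1 Ez Es gs_012.
have L2 : 2 <= L by rewrite -sL.
apply: (@gs_index_avoid _ _ L2 _ spw _ k 0) => //; last by rewrite -sL.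
by move=> m ms; apply: q_gap => //; move/allP: sz => /(_ m ms).
Qed.

Lemma gs_sminus_neq L s a b c : sorted ltn s -> 2 <= size s <= L ->
  DL L (nth 0 s (size s).-1) a ->
  gs L s a = Some b -> gs L (sminus s) a = Some c -> b <> c.
Proof.
case/lastP: s => [//|s z] hs; rewrite size_rcons nth_rcons ltnn eqxx sminus_rcons.
case/andP => s2 sL [_ Da] hb hc bc.
have [spw sz] := sorted_rcons_ltn hs; have s_z := size_ltn spw sz.
have L1 : L != 1 by lia.
have idx : gs_index L s (Q z * 3 ^ 0) = Some (Q z * 3 ^ (0 + size s)).
  by apply: gs_index_pow3 => //; lia.
rewrite expn0 muln1 add0n in idx.
have := gs_indexP hb (Q z); rewrite bc (gs_indexP hc) gs_index_rcons idx.
have s0 : 0 < size s by lia.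
by rewrite (negbTE (Q_pow3_neq _ s0)) theta_n_pow3 //; apply: Da.
Qed.

Unset Implicit Arguments.
Theorem lemma5p2 (L : nat) : 1 <= L ->
  strongly_complex (fun n => DL L n) (fun n => g L n) /\
  (forall (s : seq nat) (a b c : cantor),
      sorted ltn s -> 2 <= size s <= L ->
      DL L (nth 0 s (size s).-1) a ->
      gs L s a = Some b -> gs L (sminus s) a = Some c -> b <> c) /\
  (forall (s : seq nat) (a b c : cantor),
      sorted ltn s -> size s = L.+1 ->
      gs L s a = Some b -> gs L (sminus s) a = Some c -> b = c).
Proof.
move=> L0; split; last by split=> s a b c; [exact: gs_sminus_neq | exact: gs_sminus_eq].
split.
- by split; [exists (fun=> false) | exact: perfect].
- move=> n; split.
  + exact: (clopen_prefix (@DL_prefix L n)).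
  + exact: (clopen_prefix (@image_g_prefix L n)).
  + exact: g_continuous.
  + exact: g_open.
- by move=> a; split=> [|n]; [exact: graphs_closure | exact: g_no_fixpoint].
- by move=> n U hU _; exact: g_not_countable_to_one.
Qed.
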